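(* Let $k$ be a positive integer and $l\in\{k+2,k+3,k+4\}$. Let $N^l_k$ be the lattice ${\mathbb{Z}}^{l+1}$ with basis $\ell_0,\dots,\ell_l$ and scalar product $(\ell_0,\ell_0)=k$, $(\ell_i,\ell_i)=-1$ for $1\le i\le l$, $(\ell_i,\ell_j)=0$ for $i\ne j$, let $\omega=-\frac{k+2}{k}\ell_0+\ell_1+\dots+\ell_l$, and let $R^l_k$ be the set of $\ell\in N^l_k$ with $(\ell,\ell)=-2$ and $(\ell,\omega)=0$. Then the vectors $\pm(\ell_i-\ell_j)$ for $1\le i<j\le l$, together with $\pm\big(\ell_0-\sum_{i\in I}\ell_i\big)$ for subsets $I\subset\{1,\dots,l\}$ with $|I|=k+2$, lie in $R^l_k$ and form a root system of type $A_{k+1}\times A_1$ if $l=k+2$, $A_{k+3}$ if $l=k+3$, and $D_{k+4}$ if $l=k+4$.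
   Context: Root systems are taken with respect to the negative of the scalar product, which is positive definite on the orthogonal complement of $\omega$. *)

From HB Require Import structures.
From mathcomp Require Import all_boot all_order all_algebra.
Set Implicit Arguments. Unset Strict Implicit. Unset Printing Implicit Defensive.
Import Order.TTheory GRing.Theory Num.Theory.
Local Open Scope ring_scope.

Definition ell (l : nat) (i : 'I_l.+1) : 'rV[int]_l.+1 := delta_mx 0 i.

Definition gram (R : pzRingType) (k l : nat) : 'M[R]_l.+1 :=
  \matrix_(i, j) (if i == j then (if i == ord0 then k%:R else -1) else 0).

Definition formR (R : comPzRingType) (k l : nat) (x y : 'rV[R]_l.+1) : R :=
  (x *m gram R k l *m y^T) 0 0.

Definition formN (k l : nat) (x y : 'rV[int]_l.+1) : int := formR k x y.

Definition omega (k l : nat) : 'rV[rat]_l.+1 :=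
  \row_i (if i == ord0 then - ((k + 2)%:R / k%:R) else 1).

Definition inR (k l : nat) (v : 'rV[int]_l.+1) : Prop :=
  formN k v v = -2 /\ formR k (map_mx intr v) (omega k l) = 0.

Definition rootsS (k l : nat) : pred 'rV[int]_l.+1 := fun v =>
  [exists i : 'I_l.+1, exists j : 'I_l.+1,
     [&& i != ord0, j != ord0, i != j & v == ell i - ell j]]
  || [exists I : {set 'I_l.+1},
       [&& ord0 \notin I, #|I| == (k + 2)%N &
           (v == ell ord0 - \sum_(i in I) ell i)
           || (v == - (ell ord0 - \sum_(i in I) ell i))]].

(* A (reduced, crystallographic) root system given as a subset S of a
   Z-module V equipped with a symmetric bilinear form B, taken in the
   Z-span of S (the form must be positive definite there). *)
Definition is_root_system (V : zmodType) (B : V -> V -> int) (S : pred V) : Prop :=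
  (exists s : seq V, S =1 (fun v => v \in s) /\
     (forall c : 'I_(size s) -> int,
        let v := \sum_(i < size s) s`_i *~ c i in v != 0 -> 0 < B v v))
  /\ (forall a, S a -> a != 0)
  /\ (forall a b, S a -> S b ->
        (B a a %| 2 * B a b)%Z /\ S (b - a *~ ((2 * B a b) %/ B a a)%Z))
  /\ (forall a b (m n : int), S a -> S b -> m != 0 -> b *~ m = a *~ n ->
        b = a \/ b = - a).

Definition rs_iso (V W : zmodType) (B : V -> V -> int) (C : W -> W -> int)
  (S : pred V) (T : pred W) : Prop :=
  exists f : V -> W,
    (forall v, S v -> T (f v))
    /\ (forall u v, S u -> S v -> f u = f v -> u = v)
    /\ (forall w, T w -> exists2 v, S v & f v = w)
    /\ (forall u v, S u -> S v -> C (f u) (f v) = B u v).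

Definition dot (n : nat) (x y : 'rV[int]_n) : int := (x *m y^T) 0 0.

Definition stdA (n : nat) : pred 'rV[int]_n.+1 := fun v =>
  [exists i : 'I_n.+1, exists j : 'I_n.+1,
     (i != j) && (v == delta_mx 0 i - delta_mx 0 j)].

Definition stdD (n : nat) : pred 'rV[int]_n := fun v =>
  [exists i : 'I_n, exists j : 'I_n, exists s : bool, exists t : bool,
     (i < j)%N && (v == (-1) ^+ s *: delta_mx 0 i + (-1) ^+ t *: delta_mx 0 j)].

Definition stdAxA (m n : nat) : pred 'rV[int]_(m.+1 + n.+1) := fun v =>
  [exists i : 'I_m.+1, exists j : 'I_m.+1,
     (i != j) && (v == delta_mx 0 (lshift n.+1 i) - delta_mx 0 (lshift n.+1 j))]
  || [exists i : 'I_n.+1, exists j : 'I_n.+1,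
     (i != j) && (v == delta_mx 0 (rshift m.+1 i) - delta_mx 0 (rshift m.+1 j))].

Definition negform (k l : nat) (x y : 'rV[int]_l.+1) : int := - formN k x y.

(* Write v = (h, t_1, ..., t_l) in the basis ell_0, ..., ell_l and s_i = t_i + h.
   On omega^perp, i.e. when sum_i t_i = -(k+2) h, the negated scalar product becomes
   -(v, v') = sum_i s_i s'_i + (k + 4 - l) h h'.
   For l <= k + 4 it is therefore positive definite on omega^perp, and a vector of norm 2
   there has |h| <= 1, because |(l - k - 2) h| = |sum_i s_i| <= sum_i s_i^2 = 2 - (k+4-l) h^2.
   The norm-2 vectors with h = 0, 1, -1 are exactly the listed ones, so the listed family is
   all of R^l_k, hence stable under its own reflections.  The map v |-> s, preceded by -h
   when l = k + 3 and followed by (h, -h) when l = k + 2, is an isometry of omega^perp into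
   the standard lattice whose image meets the norm-2 vectors exactly in D_(k+4), A_(k+3)
   and A_(k+1) x A_1 respectively. *)

From Pilot Require Import Defs.
From HB Require Import structures.
From mathcomp Require Import all_boot all_order all_algebra.
From mathcomp Require Import zify ring.
Set Implicit Arguments. Unset Strict Implicit. Unset Printing Implicit Defensive.
Import Order.TTheory GRing.Theory Num.Theory.
Local Open Scope ring_scope.

Lemma mxE_mulrz m n (A : 'M[int]_(m, n)) c i j : (A *~ c) i j = A i j * c.
Proof. by rewrite -scaler_int intz mxE mulrC. Qed.

Lemma mxmulrzI r c (m : int) : m != 0 -> injective (fun A : 'M[int]_(r, c) => A *~ m).
Proof.
move=> m0 A B /matrixP AB; apply/matrixP => i j.
by have := AB i j; rewrite !mxE_mulrz => /(mulIf m0).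
Qed.

Lemma sum_supp2 (V : nmodType) (I : finType) (F : I -> V) i j : i != j ->
  (forall c, c != i -> c != j -> F c = 0) -> \sum_c F c = F i + F j.
Proof.
move=> ij F0; rewrite (bigD1 i) //= (bigD1 j) 1?eq_sym //= big1 ?addr0 //.
by move=> c /andP[]; apply: F0.
Qed.

Lemma dotE n (u v : 'rV[int]_n) : dot u v = \sum_c u 0 c * v 0 c.
Proof. by rewrite /dot mxE; apply: eq_bigr => c _; rewrite mxE. Qed.

Lemma dot_row_mx n1 n2 (a c : 'rV[int]_n1) (b d : 'rV[int]_n2) :
  dot (row_mx a b) (row_mx c d) = dot a c + dot b d.
Proof.
by rewrite !dotE big_split_ord; congr (_ + _); apply: eq_bigr => i _;
  rewrite ?row_mxEl ?row_mxEr.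
Qed.

Lemma dot0l n (v : 'rV[int]_n) : dot 0 v = 0.
Proof. by rewrite /dot mul0mx mxE. Qed.

Lemma dot_ge0 n (w : 'rV[int]_n) : 0 <= dot w w.
Proof. by rewrite dotE sumr_ge0 // => c _; rewrite -expr2 sqr_ge0. Qed.

Lemma dot_eq0 n (w : 'rV[int]_n) : dot w w = 0 -> w = 0.
Proof.
rewrite dotE => /eqP; rewrite psumr_eq0 => [/allP w0|c _]; last by rewrite -expr2 sqr_ge0.
apply/matrixP => i c; have /implyP := w0 c (mem_index_enum c).
by rewrite ord1 mxE mulf_eq0 orbb => /(_ isT)/eqP.
Qed.

Lemma abs_sum_le_dot n (w : 'rV[int]_n) : `|\sum_c w 0 c| <= dot w w.
Proof.
rewrite dotE; apply: le_trans (ler_norm_sum _ _ _) _.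
by apply: ler_sum => c _; case: (w 0 c) => [[|m]|m] /=; nia.
Qed.

Lemma dot_eq2 n (w : 'rV[int]_n) : dot w w = 2 ->
  exists (i j : 'I_n) (s t : bool), (i < j)%N /\
    w = (-1) ^+ s *: delta_mx 0 i + (-1) ^+ t *: delta_mx 0 j.
Proof.
rewrite dotE => w2.
have w_le1 c : -1 <= w 0 c <= 1.
  suff : w 0 c * w 0 c <= 2 by nia.
  by rewrite -w2 (bigD1 c) //= lerDl; apply: sumr_ge0 => i _; rewrite -expr2 sqr_ge0.
pose P := [set c | w 0 c != 0].
have /cards2P[x [y [xy Pxy]]] : #|P| == 2%N.
  rewrite -(eqr_nat int) -w2 -sumr_const big_mkcond /=; apply/eqP/eq_bigr => c _.
  by rewrite inE; have := w_le1 c; case: eqP => [->|] //=; nia.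
have [i [j [ij Pij]]] : exists i j : 'I_n, (i < j)%N /\ P = [set i; j].
  case: (ltngtP x y) => [|yx|/val_inj exy]; first by exists x, y.
  - by exists y, x; rewrite setUC.
  - by rewrite exy eqxx in xy.
exists i, j, (w 0 i < 0), (w 0 j < 0); split => //.
have ji : (j == i) = false by apply/negbTE; rewrite neq_ltn ij orbT.
apply/matrixP => ? c; rewrite ord1 !mxE !eqxx /= !mulr_natr.
have : (c \in P) = (c == i) || (c == j) by rewrite Pij !inE.
rewrite inE; have := w_le1 c.
case: (eqVneq c i) => [ci|ci]; case: (eqVneq c j) => [cj|cj]; rewrite /= ?mulr1n ?mulr0n.
- by move: ij; rewrite -ci -cj ltnn.
- by subst c; case: ltrP; rewrite ?expr1 ?expr0 addr0; lia.
- by subst c; case: ltrP; rewrite ?expr1 ?expr0 add0r; lia.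
- by rewrite addr0 => _ /negbFE/eqP.
Qed.

Lemma dot_sign_delta2 n (i j : 'I_n) (s t : bool) : i != j ->
  let w : 'rV[int]_n := (-1) ^+ s *: delta_mx 0 i + (-1) ^+ t *: delta_mx 0 j in
  dot w w = 2 /\ \sum_c w 0 c = (-1) ^+ s + (-1) ^+ t.
Proof.
move=> ij w; have wE c : w 0 c = (-1) ^+ s * (c == i)%:R + (-1) ^+ t * (c == j)%:R.
  by rewrite !mxE !eqxx.
have ji : (j == i) = false by apply/negbTE; rewrite eq_sym.
rewrite dotE !(sum_supp2 ij) => [|c ci cj|c ci cj]; rewrite ?wE ?eqxx ?ji ?(negbTE ij).
- by rewrite !mulr1 !mulr0 addr0 add0r -!expr2 !sqrr_sign.
- by rewrite (negbTE ci) (negbTE cj) !mulr0 ?addr0 ?mul0r.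
- by rewrite (negbTE ci) (negbTE cj) !mulr0 ?addr0.
Qed.

Lemma stdDP n (w : 'rV[int]_n) : stdD w <-> dot w w = 2.
Proof.
split=> [/existsP[i /existsP[j /existsP[s /existsP[t /andP[ij /eqP->]]]]]|].
  by have [] := dot_sign_delta2 s t (negbT (ltn_eqF ij)).
case/dot_eq2=> [i [j [s [t [ij ->]]]]].
by apply/existsP; exists i; apply/existsP; exists j; apply/existsP; exists s;
  apply/existsP; exists t; rewrite ij eqxx.
Qed.

Lemma stdAP n (w : 'rV[int]_n.+1) : stdA w <-> dot w w = 2 /\ \sum_c w 0 c = 0.
Proof.
split=> [/existsP[i /existsP[j /andP[ij /eqP->]]]|[]].
  have [] := dot_sign_delta2 false true ij.
  by rewrite expr0 expr1 scale1r scaleN1r addrN.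
case/dot_eq2=> [i [j [s [t [ij ->]]]]].
have [_ ->] := dot_sign_delta2 s t (negbT (ltn_eqF ij)).
case: s; case: t; rewrite ?expr0 ?expr1 => sum0; try lia.
- by apply/existsP; exists j; apply/existsP; exists i;
    rewrite eq_sym (negbT (ltn_eqF ij)) scale1r scaleN1r addrC eqxx.
- by apply/existsP; exists i; apply/existsP; exists j;
    rewrite (negbT (ltn_eqF ij)) scale1r scaleN1r eqxx.
Qed.

Lemma stdAxAP m n (a : 'rV[int]_m.+1) (b : 'rV[int]_n.+1) :
  stdAxA (row_mx a b) <-> (stdA a /\ b = 0) \/ (a = 0 /\ stdA b).
Proof.
have lE (i j : 'I_m.+1) : delta_mx 0 (lshift n.+1 i) - delta_mx 0 (lshift n.+1 j) =
    row_mx (delta_mx 0 i - delta_mx 0 j) 0 :> 'rV[int]_(m.+1 + n.+1).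
  by rewrite !delta_mx_lshift opp_row_mx add_row_mx oppr0 addr0.
have rE (i j : 'I_n.+1) : delta_mx 0 (rshift m.+1 i) - delta_mx 0 (rshift m.+1 j) =
    row_mx 0 (delta_mx 0 i - delta_mx 0 j) :> 'rV[int]_(m.+1 + n.+1).
  by rewrite !delta_mx_rshift opp_row_mx add_row_mx oppr0 addr0.
split=> [/orP[]/existsP[i /existsP[j /andP[ij /eqP]]]|
         [[/existsP[i /existsP[j /andP[ij /eqP->]]] ->]|
          [-> /existsP[i /existsP[j /andP[ij /eqP->]]]]]].
- rewrite lE => /eq_row_mx[-> ->]; left; split=> //.
  by apply/existsP; exists i; apply/existsP; exists j; rewrite ij eqxx.
- rewrite rE => /eq_row_mx[-> ->]; right; split=> //.
  by apply/existsP; exists i; apply/existsP; exists j; rewrite ij eqxx.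
- by apply/orP; left; apply/existsP; exists i; apply/existsP; exists j;
    rewrite ij lE eqxx.
- by apply/orP; right; apply/existsP; exists i; apply/existsP; exists j;
    rewrite ij rE eqxx.
Qed.

Lemma formRE (R : comPzRingType) k l (x y : 'rV[R]_l.+1) :
  formR k x y = k%:R * x 0 ord0 * y 0 ord0
     - \sum_(m < l) x 0 (lift ord0 m) * y 0 (lift ord0 m).
Proof.
have xG j : (x *m gram R k l) 0 j = x 0 j * (if j == ord0 then k%:R else -1).
  rewrite !mxE (bigD1 j) //= big1 ?addr0 => [|i /negbTE ne]; last by rewrite mxE ne mulr0.
  by rewrite mxE eqxx.
rewrite /formR !mxE big_ord_recl xG eqxx mxE -sumrN; congr (_ + _); first by ring.
apply: eq_bigr => m _; rewrite xG mxE eq_sym (negbTE (neq_lift _ _)).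
by rewrite mulrN1 mulNr.
Qed.

Lemma negformE k l (u v : 'rV[int]_l.+1) :
  negform k u v = \sum_(m < l) u 0 (lift ord0 m) * v 0 (lift ord0 m)
                  - k%:R * u 0 ord0 * v 0 ord0.
Proof.
(* Unqualified, [formN] would denote [sesquilinear.formN]. *)
by rewrite /negform /Defs.formN formRE opprB.
Qed.

Lemma negformC k l (u v : 'rV[int]_l.+1) : negform k u v = negform k v u.
Proof.
rewrite !negformE mulrAC; congr (_ - _).
by apply: eq_bigr => m _; rewrite mulrC.
Qed.

Lemma negform_is_zmod_morphism k l (u : 'rV[int]_l.+1) : zmod_morphism (negform k u).
Proof.
move=> v w; rewrite !negformE !mxE.
under eq_bigr do rewrite !mxE mulrBr.
rewrite sumrB; ring.
Qed.

HB.instance Definition _ k l (u : 'rV[int]_l.+1) :=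
  GRing.isZmodMorphism.Build _ _ (negform k u) (negform_is_zmod_morphism k u).

Lemma negformBl k l (u v w : 'rV[int]_l.+1) :
  negform k (u - v) w = negform k u w - negform k v w.
Proof. by rewrite !(negformC k _ w) raddfB. Qed.

Lemma negformMzl k l (u w : 'rV[int]_l.+1) c :
  negform k (u *~ c) w = negform k u w *~ c.
Proof. by rewrite !(negformC k _ w) raddfMz. Qed.

Definition omega_pair k l (v : 'rV[int]_l.+1) : int :=
  (k + 2)%:R * v 0 ord0 + \sum_(m < l) v 0 (lift ord0 m).

Lemma omega_pair_is_zmod_morphism k l : zmod_morphism (@omega_pair k l).
Proof.
move=> u v; rewrite /omega_pair !mxE.
under eq_bigr do rewrite !mxE.
rewrite sumrB; ring.
Qed.

HB.instance Definition _ k l :=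
  GRing.isZmodMorphism.Build _ _ (@omega_pair k l) (@omega_pair_is_zmod_morphism k l).

Lemma formR_omega k l (v : 'rV[int]_l.+1) : (0 < k)%N ->
  formR k (map_mx intr v) (omega k l) = - (omega_pair k v)%:~R.
Proof.
move=> k0; rewrite formRE !mxE eqxx /omega_pair.
under eq_bigr do rewrite !mxE eq_sym (negbTE (neq_lift _ _)) mulr1.
rewrite intrD intrM rmorph_nat rmorph_sum.
have kn : k%:R != 0 :> rat by rewrite pnatr_eq0 -lt0n.
by rewrite natrD; field.
Qed.

Lemma inRP k l (v : 'rV[int]_l.+1) : (0 < k)%N ->
  inR k v <-> negform k v v = 2 /\ omega_pair k v = 0.
Proof.
move=> k0; rewrite /inR formR_omega // /negform.
split=> -[n2 o0]; split.
- by rewrite n2 opprK.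
- by apply/eqP; move/eqP: o0; rewrite oppr_eq0 intr_eq0.
- by rewrite -n2 opprK.
- by rewrite o0 oppr0.
Qed.

Definition shift_tail l (v : 'rV[int]_l.+1) : 'rV[int]_l :=
  \row_m (v 0 (lift ord0 m) + v 0 ord0).

Lemma sum_shift_tail k l (v : 'rV[int]_l.+1) :
  \sum_m shift_tail v 0 m = omega_pair k v + (l%:R - k%:R - 2) * v 0 ord0.
Proof.
under eq_bigr do rewrite mxE.
by rewrite big_split /= sumr_const card_ord /omega_pair -mulr_natl natrD; ring.
Qed.

Lemma omega_pair_eq0 k l (v : 'rV[int]_l.+1) : omega_pair k v = 0 ->
  \sum_(m < l) v 0 (lift ord0 m) = - ((k%:R + 2) * v 0 ord0).
Proof. by rewrite /omega_pair natrD => /eqP; rewrite addrC addr_eq0 => /eqP. Qed.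

Lemma negform_shift_tail k l (u v : 'rV[int]_l.+1) :
  omega_pair k u = 0 -> omega_pair k v = 0 ->
  negform k u v = dot (shift_tail u) (shift_tail v)
                  + (k%:R + 4 - l%:R) * u 0 ord0 * v 0 ord0.
Proof.
move=> /omega_pair_eq0 su /omega_pair_eq0 sv; rewrite negformE dotE.
under [X in _ = X + _]eq_bigr do rewrite !mxE.
set a := u 0 ord0; set b := v 0 ord0.
have -> : \sum_m (u 0 (lift ord0 m) + a) * (v 0 (lift ord0 m) + b) =
          \sum_m u 0 (lift ord0 m) * v 0 (lift ord0 m)
          + a * \sum_(m < l) v 0 (lift ord0 m) + b * \sum_(m < l) u 0 (lift ord0 m)
          + l%:R * a * b.
  rewrite (eq_bigr (fun m => u 0 (lift ord0 m) * v 0 (lift ord0 m)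
     + a * v 0 (lift ord0 m) + b * u 0 (lift ord0 m) + a * b)) => [|m _]; last by ring.
  by rewrite !big_split /= -!mulr_sumr sumr_const card_ord -mulr_natr; ring.
rewrite su sv; ring.
Qed.

Section OmegaPerp.

Variables k l : nat.
Hypothesis l_le : (l <= k + 4)%N.

Let d_ge0 : 0 <= k%:R + 4 - l%:R :> int.
Proof. by rewrite subr_ge0 -(natrD _ k 4) ler_nat. Qed.

Lemma negform_gt0 (v : 'rV[int]_l.+1) : omega_pair k v = 0 -> v != 0 -> 0 < negform k v v.
Proof.
move=> ov; apply: contraNT; rewrite -leNgt negform_shift_tail // => le0.
set s := shift_tail v in le0; set h := v 0 ord0 in le0.
have s_ge0 := dot_ge0 s.
have s0 : s = 0 by apply: dot_eq0; nia.
have h0 : h = 0.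
  have := sum_shift_tail k v; rewrite -/s s0 ov big1 => [|c _]; last by rewrite mxE.
  rewrite add0r; nia.
apply/eqP/rowP => c; rewrite mxE.
case: (unliftP ord0 c) => [m ->|->] //.
by have := congr1 (fun w : 'rV[int]_l => w 0 m) s0; rewrite !mxE -/h h0 addr0.
Qed.

Lemma norm2_head_bound (v : 'rV[int]_l.+1) :
  negform k v v = 2 -> omega_pair k v = 0 -> -1 <= v 0 ord0 <= 1.
Proof.
move=> n2 ov; move: n2; rewrite negform_shift_tail //.
have := abs_sum_le_dot (shift_tail v); rewrite (sum_shift_tail k) ov add0r.
set d := k%:R + 4 - l%:R; set h := v 0 ord0.
have -> : l%:R - k%:R - 2 = 2 - d :> int by rewrite /d; ring.
rewrite ler_norml => /andP[lo hi] n2; have d0 : 0 <= d := d_ge0.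
have [d_eq0|d_ge1] : d = 0 \/ 1 <= d by lia.
  by move: lo hi n2; rewrite d_eq0; nia.
have : h * h <= 2 by nia.
nia.
Qed.

End OmegaPerp.

Lemma ell_entry l (i c : 'I_l.+1) : ell i 0 c = (c == i)%:R.
Proof. by rewrite mxE eqxx. Qed.

Lemma ell_sum_entry l (I : {set 'I_l.+1}) c : (\sum_(i in I) ell i) 0 c = (c \in I)%:R.
Proof.
rewrite summxE; under eq_bigr do rewrite ell_entry.
rewrite big_mkcond (bigD1 c) //= eqxx big1 ?addr0 => [|i ci]; first by case: (c \in I).
by rewrite eq_sym (negbTE ci); case: (i \in I).
Qed.

Lemma negform_head0 k l (v : 'rV[int]_l.+1) : v 0 ord0 = 0 ->
  negform k v v = dot v v /\ omega_pair k v = \sum_c v 0 c.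
Proof. by move=> h0; rewrite negformE /omega_pair dotE !big_ord_recl h0 !mulr0 !add0r subr0. Qed.

Lemma negformNN k l (u : 'rV[int]_l.+1) : negform k (- u) (- u) = negform k u u.
Proof. by rewrite raddfN /= negformC (raddfN (negform k u)) /= opprK. Qed.

Lemma rootsS_opp k l (v : 'rV[int]_l.+1) : rootsS k v -> rootsS k (- v).
Proof.
case/orP => [/existsP[i /existsP[j /and4P[i0 j0 ij /eqP->]]] |
             /existsP[I /and3P[I0 cardI /orP[]/eqP->]]].
- apply/orP; left; apply/existsP; exists j; apply/existsP; exists i.
  by rewrite j0 i0 eq_sym ij opprB eqxx.
- by apply/orP; right; apply/existsP; exists I; rewrite I0 cardI eqxx orbT.
- by apply/orP; right; apply/existsP; exists I; rewrite I0 cardI opprK eqxx.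
Qed.

Lemma rootsS_norm2_perp k l (v : 'rV[int]_l.+1) :
  rootsS k v -> negform k v v = 2 /\ omega_pair k v = 0.
Proof.
have lift_neq0 (m : 'I_l) : (lift ord0 m == ord0) = false.
  by apply/negbTE; rewrite eq_sym neq_lift.
have X_root (I : {set 'I_l.+1}) : ord0 \notin I -> #|I| = (k + 2)%N ->
    let x := ell ord0 - \sum_(i in I) ell i in negform k x x = 2 /\ omega_pair k x = 0.
  move=> I0 cardI x; have x0 : x 0 ord0 = 1.
    by rewrite !mxE ell_sum_entry (negbTE I0) eqxx subr0.
  have xl m : x 0 (lift ord0 m) = - (lift ord0 m \in I)%:R.
    by rewrite !mxE ell_sum_entry lift_neq0 sub0r.
  have cardE : \sum_(m < l) ((lift ord0 m \in I)%:R : int) = (k + 2)%:R.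
    rewrite -cardI -sum1_card natr_sum [RHS]big_mkcond [RHS]big_ord_recl /= (negbTE I0) add0r.
    by apply: eq_bigr => m _; case: (_ \in I).
  rewrite negformE /omega_pair x0; under eq_bigr do rewrite xl.
  under [X in _ /\ _ + X = _]eq_bigr do rewrite xl.
  rewrite sumrN cardE; under eq_bigr do rewrite mulrNN -natrM mulnb andbb.
  by rewrite cardE natrD; split; ring.
case/orP => [/existsP[i /existsP[j /and4P[i0 j0 ij /eqP->]]] |
             /existsP[I /and3P[I0 /eqP cardI /orP[]/eqP->]]].
- have [->->] : negform k (ell i - ell j) (ell i - ell j) = dot (ell i - ell j) (ell i - ell j)
              /\ omega_pair k (ell i - ell j) = \sum_c (ell i - ell j) 0 c.
    by apply: negform_head0; rewrite !mxE !eqxx !(eq_sym ord0) (negbTE i0) (negbTE j0) subr0.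
  by apply/stdAP; apply/existsP; exists i; apply/existsP; exists j; rewrite ij eqxx.
- exact: X_root.
- by have [n2 o0] := X_root I I0 cardI; rewrite negformNN n2 raddfN /= o0 oppr0.
Qed.

Lemma rootsS_head1 k l (v : 'rV[int]_l.+1) :
  negform k v v = 2 -> omega_pair k v = 0 -> v 0 ord0 = 1 -> rootsS k v.
Proof.
move=> + /omega_pair_eq0 sv h1; rewrite negformE h1 !mulr1 => /eqP.
rewrite subr_eq addrC => /eqP sq; rewrite h1 mulr1 in sv.
have tail01 m : v 0 (lift ord0 m) = 0 \/ v 0 (lift ord0 m) = -1.
  have /eqP : \sum_(m < l) (v 0 (lift ord0 m) * v 0 (lift ord0 m) + v 0 (lift ord0 m)) = 0.
    by rewrite big_split /= sq sv subrr.
  by rewrite psumr_eq0 => [/allP/(_ m (mem_index_enum m))/eqP|i _]; nia.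
pose I := [set c | v 0 c == -1].
have I0 : ord0 \notin I by rewrite inE h1.
have cardI : #|I| = (k + 2)%N.
  apply/eqP; rewrite -(eqr_nat int) -sum1_card natr_sum big_mkcond big_ord_recl /=.
  rewrite (negbTE I0) add0r natrD -[_ + 2]opprK -sv -sumrN; apply/eqP/eq_bigr => m _.
  by rewrite inE; case: (tail01 m) => ->.
apply/orP; right; apply/existsP; exists I; rewrite I0 cardI eqxx /=; apply/orP; left.
apply/eqP/rowP => c; rewrite !mxE ell_sum_entry.
case: (unliftP ord0 c) => [m ->|->]; last by rewrite h1 eqxx (negbTE I0) subr0.
by rewrite inE eq_sym (negbTE (neq_lift _ _)) andbF; case: (tail01 m) => ->.
Qed.

Lemma rootsSP k l (v : 'rV[int]_l.+1) : (l <= k + 4)%N ->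
  rootsS k v <-> negform k v v = 2 /\ omega_pair k v = 0.
Proof.
move=> lk; split=> [|[n2 o0]]; first exact: rootsS_norm2_perp.
have [h|[h|h]] : v 0 ord0 = -1 \/ v 0 ord0 = 0 \/ v 0 ord0 = 1.
  by have := norm2_head_bound lk n2 o0; lia.
- rewrite -[v]opprK; apply/rootsS_opp/rootsS_head1; first by rewrite negformNN.
    by rewrite raddfN /= o0 oppr0.
  by rewrite mxE h opprK.
- have [nv ov] := negform_head0 k h.
  have /stdAP/existsP[i /existsP[j /andP[ij /eqP vE]]] : dot v v = 2 /\ \sum_c v 0 c = 0.
    by rewrite -nv -ov.
  have [i0 j0] : i != ord0 /\ j != ord0.
    move: h ij; rewrite vE !mxE !eqxx /= !(eq_sym ord0).
    by case: (i =P ord0) => [->|_]; case: (j =P ord0) => [->|_]; rewrite ?eqxx //=; lia.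
  by apply/orP; left; apply/existsP; exists i; apply/existsP; exists j; rewrite i0 j0 ij vE eqxx.
- exact: rootsS_head1.
Qed.

Lemma reflection_norm2_perp k l (a b : 'rV[int]_l.+1) :
  negform k a a = 2 -> omega_pair k a = 0 -> negform k b b = 2 -> omega_pair k b = 0 ->
  let r := b - a *~ negform k a b in negform k r r = 2 /\ omega_pair k r = 0.
Proof.
move=> na oa nb ob r; rewrite /r negformBl !raddfB /= !negformMzl !raddfMz /=.
rewrite (negformC k b a) na nb oa ob; split; ring.
Qed.

Lemma rootsS_root_system k l : (l <= k + 4)%N -> is_root_system (@negform k l) (@rootsS k l).
Proof.
move=> lk; split; [|split; [|split]].
- pose X (I : {set 'I_l.+1}) := ell ord0 - \sum_(i in I) ell i.
  exists [seq v <- [seq ell p.1 - ell p.2 | p : 'I_l.+1 * 'I_l.+1]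
                  ++ [seq (-1) ^+ p.1 *: X p.2 | p : bool * {set 'I_l.+1}] | rootsS k v].
  split=> [v|c v v0].
    rewrite mem_filter; case rv: (rootsS k v) => //=; symmetry; rewrite mem_cat; move: rv.
    case/orP => [/existsP[i /existsP[j /and4P[_ _ _ /eqP->]]] |
                 /existsP[I /and3P[_ _ /orP[]/eqP->]]]; apply/orP.
    + by left; apply/mapP; exists (i, j); rewrite ?mem_enum.
    + by right; apply/mapP; exists (false, I); rewrite ?mem_enum ?scale1r.
    + by right; apply/mapP; exists (true, I); rewrite ?mem_enum ?scaleN1r.
  apply: negform_gt0 => //; rewrite raddf_sum big1 // => i _; rewrite raddfMz /=.
  have := mem_nth 0 (ltn_ord i); rewrite mem_filter => /andP[/(rootsSP _ lk)[_ ->] _].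
  by rewrite mul0rz.
- move=> a /(rootsSP _ lk)[na _]; apply: contra_eqN na => /eqP->.
  by rewrite raddf0.
- move=> a b /(rootsSP _ lk)[na oa] /(rootsSP _ lk)[nb ob]; rewrite na mulKz //.
  split; first exact/dvdz_mulr/dvdzz.
  by apply/(rootsSP _ lk); apply: reflection_norm2_perp.
- move=> a b m n /(rootsSP _ lk)[na _] /(rootsSP _ lk)[nb _] m0 ba.
  have : n * n = m * m.
    have := congr1 (fun x => negform k x x) ba.
    by rewrite /= !negformMzl !raddfMz /= na nb; lia.
  move=> nm; have [n_m|n_Nm] : n = m \/ n = - m by nia.
  + by left; apply: (mxmulrzI m0); rewrite /= ba n_m.
  + by right; apply: (mxmulrzI m0); rewrite /= ba n_Nm mulrNz mulNrz.
Qed.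

Lemma rootsS_rs_iso k l n (T : pred 'rV[int]_n) (f : 'rV[int]_l.+1 -> 'rV[int]_n) :
  (l <= k + 4)%N -> zmod_morphism f ->
  (forall u v, omega_pair k u = 0 -> omega_pair k v = 0 -> dot (f u) (f v) = negform k u v) ->
  (forall w, T w <-> dot w w = 2 /\ exists2 v, omega_pair k v = 0 & f v = w) ->
  rs_iso (@negform k l) (@dot n) (@rootsS k l) T.
Proof.
move=> lk fB fiso Tf; exists f; split; [|split; [|split]].
- move=> v /(rootsSP _ lk)[nv ov]; apply/Tf.
  by split; [rewrite fiso | exists v].
- move=> u v /(rootsSP _ lk)[_ ou] /(rootsSP _ lk)[_ ov] fuv; apply/eqP.
  have ouv : omega_pair k (u - v) = 0 by rewrite raddfB /= ou ov subrr.
  rewrite -subr_eq0; apply/negPn/negP => /(negform_gt0 lk ouv).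
  by rewrite -fiso // fB fuv subrr dot0l ltxx.
- move=> w /Tf[w2 [v ov fv]]; exists v => //.
  by apply/(rootsSP _ lk); rewrite -fiso // fv.
- by move=> u v /(rootsSP _ lk)[_ ou] /(rootsSP _ lk)[_ ov]; apply: fiso.
Qed.

Lemma shift_tail_is_zmod_morphism l : zmod_morphism (@shift_tail l).
Proof. by move=> u v; apply/rowP => m; rewrite !mxE; ring. Qed.

Definition unshift_tail l (h : int) (w : 'rV[int]_l) : 'rV[int]_l.+1 :=
  \row_c (if unlift ord0 c is Some m then w 0 m - h else h).

Lemma unshift_tail_head l h (w : 'rV[int]_l) : unshift_tail h w 0 ord0 = h.
Proof. by rewrite mxE unlift_none. Qed.

Lemma unshift_tailK l h (w : 'rV[int]_l) : shift_tail (unshift_tail h w) = w.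
Proof. by apply/rowP => m; rewrite !mxE liftK unlift_none subrK. Qed.

Lemma omega_pair_unshift_tail k l h (w : 'rV[int]_l) :
  omega_pair k (unshift_tail h w) = \sum_m w 0 m + (k%:R + 2 - l%:R) * h.
Proof.
rewrite /omega_pair unshift_tail_head; under eq_bigr do rewrite mxE liftK.
by rewrite sumrB sumr_const card_ord -mulr_natl natrD; ring.
Qed.

Lemma rootsS_iso_D k :
  rs_iso (@negform k (k + 4)) (@dot _) (@rootsS k (k + 4)) (@stdD (k + 4)).
Proof.
apply: rootsS_rs_iso (@shift_tail_is_zmod_morphism _) _ _ => //.
  by move=> u v ou ov; rewrite negform_shift_tail // natrD subrr !mul0r addr0.
move=> w; rewrite stdDP; split=> [w2|[] //]; split=> //.
have [i [j [s [t [ij wE]]]]] := dot_eq2 w2.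
have [_ sw] := dot_sign_delta2 s t (negbT (ltn_eqF ij)); rewrite -wE in sw.
have even : (2 %| \sum_c w 0 c)%Z by rewrite sw; case: (s); case: (t).
exists (unshift_tail ((\sum_c w 0 c) %/ 2)%Z w); last exact: unshift_tailK.
rewrite omega_pair_unshift_tail natrD (_ : _ + 2 - _ = -2); last by ring.
by rewrite mulNr mulrC divzK // subrr.
Qed.

Definition flip_head l (v : 'rV[int]_l.+1) : 'rV[int]_l.+1 :=
  \row_c (if unlift ord0 c is Some m then shift_tail v 0 m else - v 0 ord0).

Lemma flip_headK l : involutive (@flip_head l).
Proof.
move=> v; apply/rowP => c; rewrite !mxE.
case: (unliftP ord0 c) => [m|] ->; rewrite ?liftK ?unlift_none ?opprK // mxE.
by rewrite !mxE liftK unlift_none mxE addrK.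
Qed.

Lemma flip_head_is_zmod_morphism l : zmod_morphism (@flip_head l).
Proof.
move=> u v; apply/rowP => c; rewrite !mxE.
by case: (unlift ord0 c) => [m|]; rewrite ?mxE ?opprD //; ring.
Qed.

Lemma dot_flip_head l (u v : 'rV[int]_l.+1) :
  dot (flip_head u) (flip_head v) = u 0 ord0 * v 0 ord0 + dot (shift_tail u) (shift_tail v).
Proof.
rewrite !dotE big_ord_recl !mxE unlift_none mulrNN.
by congr (_ + _); under eq_bigr do rewrite !mxE liftK.
Qed.

Lemma rootsS_iso_A k :
  rs_iso (@negform k (k + 3)) (@dot _) (@rootsS k (k + 3)) (@stdA (k + 3)).
Proof.
have sum_flip (v : 'rV[int]_(k + 3).+1) : \sum_c flip_head v 0 c = omega_pair k v.
  rewrite big_ord_recl mxE unlift_none; under eq_bigr do rewrite mxE liftK.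
  by rewrite (sum_shift_tail k) natrD; ring.
apply: rootsS_rs_iso (@flip_head_is_zmod_morphism _) _ _.
- by rewrite leq_add2l.
- by move=> u v ou ov; rewrite dot_flip_head negform_shift_tail // natrD; ring.
- move=> w; rewrite stdAP; split=> -[w2 sw]; split=> //.
  + by exists (flip_head w); rewrite ?flip_headK // -sum_flip flip_headK.
  + by case: sw => v ov <-; rewrite sum_flip.
Qed.

Definition opp_pair (x : int) : 'rV[int]_2 := \row_r (if r == ord0 then x else - x).

Lemma dot_opp_pair x y : dot (opp_pair x) (opp_pair y) = 2 * (x * y).
Proof. by rewrite dotE !big_ord_recl big_ord0 !mxE /= mulrNN addr0; ring. Qed.

Lemma sum_eq0_opp_pair (b : 'rV[int]_2) : \sum_r b 0 r = 0 <-> b = opp_pair (b 0 ord0).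
Proof.
rewrite !big_ord_recl big_ord0 addr0; split=> [/eqP|->].
  rewrite addr_eq0 => /eqP b1; apply/rowP => r; rewrite !mxE.
  by case: r => [[|[|//]] ?] /=; [|rewrite b1 opprK]; congr (b 0 _); exact: val_inj.
by rewrite !mxE /= subrr.
Qed.

Lemma rootsS_iso_AxA k :
  rs_iso (@negform k (k + 1).+1) (@dot _) (@rootsS k (k + 1).+1) (@stdAxA (k + 1) 1).
Proof.
have lE : ((k + 1).+1%:R : int) = k%:R + 2 by rewrite -addn1 -addnA natrD.
pose f (v : 'rV[int]_(k + 1).+2) := row_mx (shift_tail v) (opp_pair (v 0 ord0)).
have im_f a b : (exists2 v, omega_pair k v = 0 & f v = row_mx a b) <->
    \sum_m a 0 m = 0 /\ \sum_r b 0 r = 0.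
  rewrite sum_eq0_opp_pair; split=> [[v ov /eq_row_mx[<- <-]]|[sa bE]].
    split; last by rewrite !mxE eqxx.
    by rewrite (sum_shift_tail k) ov lE; ring.
  exists (unshift_tail (b 0 ord0) a); last by rewrite /f unshift_tailK unshift_tail_head -bE.
  by rewrite omega_pair_unshift_tail sa lE; ring.
apply: (@rootsS_rs_iso _ _ _ _ f).
- lia.
- move=> u v; rewrite /f opp_row_mx add_row_mx shift_tail_is_zmod_morphism; congr row_mx.
  by apply/rowP => r; rewrite !mxE; case: (r == ord0); ring.
- move=> u v ou ov; rewrite dot_row_mx dot_opp_pair negform_shift_tail //.
  by rewrite lE; ring.
move=> w; rewrite -[w]hsubmxK stdAxAP dot_row_mx im_f.
set a := lsubmx w; set b := rsubmx w.
split=> [[[/stdAP[a2 sa] ->]|[-> /stdAP[b2 sb]]]|[ab2 [sa sb]]].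
- rewrite dot0l addr0 a2 sa; split=> //; split=> //.
  by rewrite big1 // => r _; rewrite mxE.
- rewrite dot0l add0r b2 sb; split=> //; split=> //.
  by rewrite big1 // => m _; rewrite mxE.
have /sum_eq0_opp_pair bE := sb.
have [x0|x_neq0] := eqVneq (b 0 ord0) 0.
  left; split; last by rewrite bE x0; apply/rowP => r; rewrite !mxE oppr0 if_same.
  by apply/stdAP; split=> //; move: ab2; rewrite bE x0 dot_opp_pair !mul0r addr0.
have a0 : a = 0.
  apply: dot_eq0; have := dot_ge0 a; move: ab2; rewrite bE dot_opp_pair.
  by move: x_neq0; set x := b 0 ord0 => /eqP x_neq0; nia.
right; split=> //; apply/stdAP; split=> //.
by move: ab2; rewrite a0 dot0l add0r.
Qed.

Theorem proposition5p5 (k l : nat) :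
  (0 < k)%N ->
  (l = k + 2 \/ l = k + 3 \/ l = k + 4)%N ->
  (forall v, @rootsS k l v -> @inR k l v)
  /\ is_root_system (@negform k l) (@rootsS k l)
  /\ (l = k + 2 -> rs_iso (@negform k l) (@dot _) (@rootsS k l) (@stdAxA (k + 1) 1))%N
  /\ (l = k + 3 -> rs_iso (@negform k l) (@dot _) (@rootsS k l) (@stdA (k + 3)))%N
  /\ (l = k + 4 -> rs_iso (@negform k l) (@dot _) (@rootsS k l) (@stdD (k + 4)))%N.
Proof.
move=> k_gt0 l_cases.
have l_le : (l <= k + 4)%N by case: l_cases => [|[]] ->; lia.
split; first by move=> v /(rootsSP _ l_le)/(inRP _ k_gt0).
split; first exact: rootsS_root_system.
split.
  move=> l_eq; have {}l_eq : l = (k + 1).+1 by lia.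
  by subst l; exact: rootsS_iso_AxA.
by split=> ->; [exact: rootsS_iso_A | exact: rootsS_iso_D].
Qed.
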